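(* Let $\mathbb{F}$ be any field and let $n,d\ge 1$. For every $n^d\times n^d$ matrix $M$ over $\mathbb{F}$, \[ \mathcal{L}_{\mathsf{sm}}\big(\mathrm{ShiftedTensor}(M)\big)\;\ge\;\frac{\mathrm{PT\text{-}rank}(M)}{n^{\,d-\log_2 d+1}}. \] Equivalently, every syntactically set-multilinear arithmetic formula computing the set-multilinear polynomial \[ \widetilde Q_M=\sum_{\vec i,\vec j\in[n]^d} M_{\vec i,\vec j}\,\widetilde X^{(0)}_{i_1}\widetilde X^{(1)}_{j_1,i_2}\cdots\widetilde X^{(d-1)}_{j_{d-1},i_d}\widetilde X^{(d)}_{j_d} \] (with respect to the $d+1$ variable blocks $\widetilde X^{(0)},\dots,\widetilde X^{(d)}$) has at least $\mathrm{PT\text{-}rank}(M)/n^{d-\log_2 d+1}$ leaves.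
   Context: Rows and columns of an $n^d\times n^d$ matrix $M$ are indexed by $d$-tuples in $[n]^d$. For $k\in[d]$ the $k$-th partial transpose is $M^{\top_k}_{(i_1,\dots,i_d),(j_1,\dots,j_d)}=M_{(i_1,\dots,i_{k-1},j_k,i_{k+1},\dots,i_d),(j_1,\dots,j_{k-1},i_k,j_{k+1},\dots,j_d)}$; for $\kappa\subseteq[d]$, $M^{\top_\kappa}$ is the composition of the (commuting) $\top_k$, $k\in\kappa$. $M$ is PT-basic if $\mathrm{rank}(M^{\top_\kappa})=1$ for some $\kappa\subseteq[d]$; $\mathrm{PT\text{-}rank}(M)$ is the minimum number of PT-basic matrices summing to $M$. Pairing: $\langle i,j\rangle=(i-1)n+j$, a bijection $[n]^2\to[n^2]$. $\mathrm{ShiftedTensor}(M):[n^2]^{d+1}\to\mathbb{F}$ is defined by $\mathrm{ShiftedTensor}(M)(\langle p,i_1\rangle,\langle j_1,i_2\rangle,\dots,\langle j_{d-1},i_d\rangle,\langle j_d,q\rangle)=\mathbb 1\{p=q=1\}\,M_{(i_1,\dots,i_d),(j_1,\dots,j_d)}$. Set-multilinear formula size: for a nonempty finite set $D$ and a tensor $A:[N]^D\to\mathbb{F}$, $\mathcal L_{\mathsf{sm}}(A)$ is defined inductively: if $|D|=1$, it is $1$ if $A\neq 0$ and $0$ otherwise; if $|D|\ge 2$, it is the minimum of $\sum_i(\mathcal L_{\mathsf{sm}}(B_i)+\mathcal L_{\mathsf{sm}}(C_i))$ over finite families $(E_i,F_i,B_i,C_i)$ with $E_i,F_i$ disjoint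 nonempty, $E_i\cup F_i=D$, $B_i:[N]^{E_i}\to\mathbb{F}$, $C_i:[N]^{F_i}\to\mathbb{F}$ and $A=\sum_i B_i\otimes C_i$. This equals the minimum number of leaves of a syntactically set-multilinear formula computing $\sum_{a\in[N]^D}A(a)\prod_{k\in D}X^{(k)}_{a_k}$. Logarithms are base 2. *)

From HB Require Import structures.
From mathcomp Require Import all_boot all_order all_algebra.
From mathcomp Require Import boolp.
From Stdlib Require Rdefinitions Raxioms Rpower.

Set Implicit Arguments.
Unset Strict Implicit.
Unset Printing Implicit Defensive.

Import GRing.Theory.
Local Open Scope ring_scope.

(* A tensor on D subset of K with entries in [N] is represented as a   *)
(* function on full assignments K -> 'I_N that depends only on the     *)
(* coordinates in D.                                                   *)
Section SetMultilinear.
Variables (F : fieldType) (K : finType) (N : nat).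

Definition asg := {ffun K -> 'I_N}.

Definition dep_on (D : {set K}) (A : asg -> F) : Prop :=
  forall a b : asg, (forall k, k \in D -> a k = b k) -> A a = A b.

Inductive sm_cost : {set K} -> (asg -> F) -> nat -> Prop :=
| sm_leaf (D : {set K}) (A : asg -> F) :
    #|D| = 1%N -> dep_on D A ->
    sm_cost D A (if [exists a, A a != 0] then 1%N else 0%N)
| sm_split (D : {set K}) (A : asg -> F) (r : nat)
    (E G : 'I_r -> {set K}) (B C : 'I_r -> asg -> F) (sB sC : 'I_r -> nat) :
    (1 < #|D|)%N ->
    (forall i, [disjoint E i & G i] /\ E i != set0 /\ G i != set0
               /\ E i :|: G i = D) ->
    (forall i, sm_cost (E i) (B i) (sB i)) ->
    (forall i, sm_cost (G i) (C i) (sC i)) ->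
    (forall a, A a = \sum_(i < r) B i a * C i a) ->
    sm_cost D A (\sum_(i < r) (sB i + sC i))%N.

Lemma sm_cost_ex_bool (D : {set K}) (A : asg -> F) :
  (exists s, sm_cost D A s) -> exists s, `[< sm_cost D A s >].
Proof. by case=> s h; exists s; apply/asboolP. Qed.

(* The minimum cost (a decomposition always exists; the fallback 0 is
   never used, and would only strengthen a lower bound). *)
Definition L_sm (D : {set K}) (A : asg -> F) : nat :=
  match pselect (exists s, sm_cost D A s) with
  | left h => ex_minn (sm_cost_ex_bool h)
  | right _ => 0%N
  end.

End SetMultilinear.

Notation Idx n d := {ffun 'I_d -> 'I_n}.

Section PT.
Variables (F : fieldType) (n d : nat).

Notation mat := 'M[F]_#|Idx n d|.

(* M^{T_kappa}_{a,b} = M_{a',b'} with a'_k = b_k, b'_k = a_k for k in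
   kappa, and a'_k = a_k, b'_k = b_k otherwise (composition of the
   commuting single partial transposes T_k, k in kappa). *)
Definition ptrans (kappa : {set 'I_d}) (M : mat) : mat :=
  \matrix_(x, y)
    let a : Idx n d := enum_val x in let b : Idx n d := enum_val y in
    M (enum_rank [ffun k => if k \in kappa then b k else a k])
      (enum_rank [ffun k => if k \in kappa then a k else b k]).

Definition PT_basic (M : mat) : Prop :=
  exists kappa : {set 'I_d}, \rank (ptrans kappa M) = 1%N.

Definition PT_rank_le (M : mat) (r : nat) : Prop :=
  exists s : seq mat, size s = r /\ (forall B, B \in s -> PT_basic B)
                      /\ M = \sum_(B <- s) B.

Lemma ptrans0 (M : mat) : ptrans set0 M = M.
Proof.
apply/matrixP=> x y; rewrite mxE /=.
rewrite (_ : finfun _ = enum_val x); last first.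
  by apply/ffunP=> k; rewrite ffunE in_set0.
rewrite (_ : finfun _ = enum_val y); last first.
  by apply/ffunP=> k; rewrite ffunE in_set0.
by rewrite !enum_valK.
Qed.

Lemma PT_rank_ex (M : mat) : exists r, `[< PT_rank_le M r >].
Proof.
set P := [pred p : 'I_#|Idx n d| * 'I_#|Idx n d| | M p.1 p.2 != 0].
exists (size [seq M p.1 p.2 *: delta_mx p.1 p.2 | p <- enum P]).
apply/asboolP; eexists; split; first reflexivity; split.
  move=> B /mapP [p]; rewrite mem_enum inE => Mp ->.
  exists set0; rewrite ptrans0.
  by rewrite (eqmx_scale _ Mp) mxrank_delta.
rewrite big_map big_filter /= [LHS]matrix_sum_delta pair_bigA /=.
rewrite [LHS](bigID P) /= [X in _ + X]big1 ?addr0 //=; last first.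
  by move=> p /negPn /eqP ->; rewrite scale0r.
Qed.

Definition PT_rank (M : mat) : nat := ex_minn (PT_rank_ex M).

Lemma pair_ix_lt (x y : 'I_n) : (x * n + y < n * n)%N.
Proof.
have hx := ltn_ord x; have hy := ltn_ord y.
apply: (@leq_trans (x * n + n)%N); first by rewrite ltn_add2l.
by rewrite -mulSnr leq_mul2r hx orbT.
Qed.

(* 0-indexed version of <i,j> = (i-1) n + j *)
Definition pair_ix (x y : 'I_n) : 'I_(n * n) := Ordinal (pair_ix_lt x y).

(* the assignment (<p,i_1>, <j_1,i_2>, ..., <j_{d-1},i_d>, <j_d,q>) *)
Definition shifted_asg (p q : 'I_n) (i j : Idx n d) : {ffun 'I_d.+1 -> 'I_(n * n)} :=
  [ffun t : 'I_d.+1 =>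
     pair_ix
       (if val t == 0%N then p
        else if (insub (val t).-1 : option 'I_d) is Some k then j k else p)
       (if (insub (val t) : option 'I_d) is Some k then i k else q)].

Definition ShiftedTensor (M : mat) (a : {ffun 'I_d.+1 -> 'I_(n * n)}) : F :=
  if [pick x : 'I_n * 'I_n * Idx n d * Idx n d |
        a == shifted_asg x.1.1.1 x.1.1.2 x.1.2 x.2] is Some x
  then (if (val x.1.1.1 == 0%N) && (val x.1.1.2 == 0%N)
        then M (enum_rank x.1.2) (enum_rank x.2) else 0)
  else 0.

End PT.

Definition log2 (x : Rdefinitions.R) : Rdefinitions.R :=
  Rdefinitions.Rdiv (Rpower.ln x) (Rpower.ln (Raxioms.INR 2)).

Definition PT_bound (r n d : nat) : Rdefinitions.R :=
  Rdefinitions.Rdiv (Raxioms.INR r)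
    (Rpower.Rpower (Raxioms.INR n)
       (Rdefinitions.Rplus
          (Rdefinitions.Rminus (Raxioms.INR d) (log2 (Raxioms.INR d)))
          (Raxioms.INR 1))).

(* Splitting a set-multilinear formula at its root gives A = sum_i B_i (x) C_i;
   recursing into the larger side of each split and appending the smaller side
   as one more factor writes A as a sum of at most L_sm(A) products of t factors
   on disjoint blocks of coordinates with |D| <= 2^(t-1), i.e.
   t - 1 >= log2 (d + 1) for D = {0, ..., d}.  In ShiftedTensor(M), block k
   carries (j_k, i_(k+1)).  Colour the factors with two colours so that the path
   of blocks 0, 1, ..., d changes colour at least t - 1 times, and group them by
   colour.  At a change between blocks k - 1 and k the indices i_k and j_k are
   read by different groups, so a partial transpose sends the one read by the
   first group to the rows and the other to the columns; fixing the at most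
   d + 1 - t remaining pairs (i_k, j_k) leaves n^(d+1-t) matrices of rank <= 1.
   Hence PT-rank(M) <= L_sm * n^(d - log2 (d + 1)). *)

From Stdlib Require Import Reals Lra Lia.

Section NumericBound.
Local Open Scope R_scope.

Lemma PT_bound_le (r s n d L : nat) : (0 < n)%nat -> (0 < d)%nat ->
  (L <= d)%nat -> (d <= 2 ^ L)%nat -> (r <= s * n ^ (d - L))%nat ->
  INR s >= PT_bound r n d.
Proof.
intros hn hd hL hdL hr; unfold PT_bound, log2.
assert (n0 : 0 < INR n) by (apply lt_0_INR; lia).
assert (ln2 : 0 < ln (INR 2)) by (rewrite <- ln_1; apply ln_increasing; simpl; lra).
assert (hlog : ln (INR d) / ln (INR 2) <= INR L).
{ apply Rmult_le_reg_r with (ln (INR 2)); [exact ln2|].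
  unfold Rdiv; rewrite Rmult_assoc, Rinv_l, Rmult_1_r by lra.
  rewrite <- ln_pow, <- pow_INR by (simpl; lra).
  destruct (Rle_lt_or_eq_dec _ _ (le_INR _ _ hdL)) as [hlt | ->]; [|lra].
  left; apply ln_increasing; [apply lt_0_INR; lia | exact hlt]. }
set (x := INR d - ln (INR d) / ln (INR 2) + INR 1).
assert (hx : INR (d - L) <= x).
{ unfold x; rewrite minus_INR by exact hL; change (INR 1) with 1; lra. }
assert (hpow : INR n ^ (d - L) <= Rpower (INR n) x).
{ rewrite <- Rpower_pow by exact n0.
  apply Rle_Rpower; [apply (le_INR 1); lia | exact hx]. }
assert (hpos : 0 < Rpower (INR n) x) by apply exp_pos.
apply Rle_ge; apply Rmult_le_reg_r with (Rpower (INR n) x); [exact hpos|].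
unfold Rdiv; rewrite Rmult_assoc, Rinv_l, Rmult_1_r by lra.
apply Rle_trans with (INR s * INR n ^ (d - L)).
- rewrite <- pow_INR, <- mult_INR; apply le_INR; exact hr.
- apply Rmult_le_compat_l; [apply pos_INR | exact hpow].
Qed.

End NumericBound.

From HB Require Import structures.
From mathcomp Require Import all_boot all_order all_algebra boolp.
From mathcomp Require Import zify.

Set Implicit Arguments.
Unset Strict Implicit.
Unset Printing Implicit Defensive.

Import GRing.Theory.

Lemma exists_colouring (T : eqType) (h : nat -> T) (m : nat) :
  exists col : T -> bool,
    (size (undup [seq h k | k <- iota 0 m.+1])).-1
      <= count (fun k => col (h k) != col (h k.+1)) (iota 0 m).
Proof.
elim: m h => [|m IH] h; first by exists xpred0.
have [col hcol] := IH (h \o succn).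
have iota0S k : iota 0 k.+1 = 0 :: map succn (iota 0 k) by rewrite /= -(iotaDl 1 0).
rewrite (map_comp h succn) in hcol; set rest := map h (map succn _) in hcol.
have rest_h k : 0 < k <= m.+1 -> h k \in rest.
  move=> hk; apply: map_f; apply/mapP; exists k.-1; last by rewrite prednK //; lia.
  by rewrite mem_iota; lia.
rewrite (iota0S m.+1) map_cons -/rest; clearbody rest.
rewrite (iota0S m) /=.
case: ifPn => [h0_rest|h0_rest].
  by exists col; rewrite count_map (leq_trans hcol) ?leq_addl.
pose col' x := if x == h 0 then ~~ col (h 1) else col x.
have col'E k : 0 < k <= m.+1 -> col' (h k) = col (h k).
  by move=> hk; rewrite /col' ifN //; apply: contraNneq h0_rest => <-; apply: rest_h.
exists col'; rewrite count_map (col'E 1) // {1}/col' eqxx.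
rewrite (@eq_in_count _ _ (fun k => col (h k.+1) != col (h k.+2))); last first.
  by move=> k; rewrite mem_iota => hk /=; rewrite !col'E //; lia.
by move: hcol => /=; case: (col (h 1)) => /=; lia.
Qed.

Lemma card_ord_count d (P : pred nat) : #|[set k : 'I_d | P k]| = count P (iota 0 d).
Proof.
by rewrite -val_enum_ord count_map cardsE cardE /enum_mem size_filter filter_predT.
Qed.

Local Open Scope ring_scope.

Section SetMultilinear.
Variables (F : fieldType) (K : finType) (N : nat).
Local Notation asgK := (asg K N).

Lemma dep_onS (D D' : {set K}) (A : asgK -> F) :
  D \subset D' -> dep_on D A -> dep_on D' A.
Proof. by move=> /subsetP sDD' hA a b hab; apply: hA => k /sDD'; apply: hab. Qed.

Lemma sm_cost_dep_on (D : {set K}) (A : asgK -> F) s : sm_cost D A s -> dep_on D A.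
Proof.
elim=> {D A s} [//|D A r E G B C sB sC _ hEG _ IHB _ IHC hA] a b hab.
rewrite !hA; apply: eq_bigr => i _; have [_ [_ [_ hU]]] := hEG i.
by rewrite (IHB i a b) ?(IHC i a b) // => k hk; apply: hab; rewrite -hU inE hk ?orbT.
Qed.

(* Peel off one coordinate b: A = sum_v [a b = v] * A(a with b set to v). *)
Lemma sm_cost_exists (D : {set K}) (A : asgK -> F) :
  D != set0 -> dep_on D A -> exists s, sm_cost D A s.
Proof.
move: {2}#|D| (leqnn #|D|) => m; elim: m D A => [|m IH] D A.
  by rewrite leqn0 cards_eq0 => /eqP ->; rewrite eqxx.
move=> hm hD hA; have [b bD] := set0Pn _ hD.
have [D1|D_gt1] := leqP #|D| 1.
  by eexists; apply: sm_leaf => //; apply/eqP; rewrite eqn_leq D1 card_gt0.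
have hDb : D :\ b != set0 by rewrite -card_gt0 (cardsD1 b D) bD in D_gt1 *.
have hmb : (#|D :\ b| <= m)%N by rewrite (cardsD1 b D) bD in hm.
pose upd (a : asgK) (v : 'I_N) : asgK := [ffun k => if k == b then v else a k].
have hC v : dep_on (D :\ b) (fun a => A (upd a v)).
  move=> a a' haa; apply: hA => k kD; rewrite !ffunE.
  by case: eqP => // /eqP kb; apply: haa; rewrite !inE kb.
pose sC v := sval (cid (IH _ _ hmb hDb (hC v))).
have sCP v : sm_cost (D :\ b) (fun a => A (upd a v)) (sC v) by rewrite /sC; case: cid.
eexists; apply: (@sm_split F K N D A N (fun _ => [set b]) (fun _ => D :\ b)
   (fun v a => if a b == v then 1 else 0) (fun v a => A (upd a v)) _ sC D_gt1) => //.
- move=> v; rewrite disjoints1 !inE eqxx setD1K //; split=> //; split=> //.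
  by apply/set0Pn; exists b; rewrite inE.
- move=> v; apply: sm_leaf; first by rewrite cards1.
  by move=> a a' h; rewrite h // inE.
- move=> a; rewrite (bigD1 (a b)) //= eqxx mul1r big1 ?addr0.
    by apply: hA => k _; rewrite ffunE; case: eqP => // ->.
  by move=> v /negPf; rewrite eq_sym => ->; rewrite mul0r.
Qed.

Lemma sm_cost_L_sm (D : {set K}) (A : asgK -> F) :
  D != set0 -> dep_on D A -> sm_cost D A (L_sm D A).
Proof.
move=> hD hA; rewrite /L_sm; case: pselect => [h|[]]; last exact: sm_cost_exists.
by case: ex_minnP => s /asboolP.
Qed.

Definition log_product (D : {set K}) (t : nat) (lab : K -> 'I_t)
    (g : 'I_t -> asgK -> F) : Prop :=
  [/\ (#|D| <= 2 ^ t.-1)%N, forall l, exists2 b, b \in D & lab b = l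
    & forall l, dep_on [set b in D | lab b == l] (g l)].

Inductive log_product_sum (D : {set K}) : (asgK -> F) -> nat -> Prop :=
| lps_zero : log_product_sum D (fun _ => 0) 0
| lps_prod t lab g : @log_product D t lab g ->
    log_product_sum D (fun a => \prod_(l < t) g l a) 1
| lps_add A B s1 s2 : log_product_sum D A s1 -> log_product_sum D B s2 ->
    log_product_sum D (fun a => A a + B a) (s1 + s2)
| lps_weaken A B s s' : A =1 B -> (s <= s')%N -> log_product_sum D A s ->
    log_product_sum D B s'.

Lemma log_product_sum_big (D : {set K}) (I : Type) (r : seq I)
    (A : I -> asgK -> F) (s : I -> nat) :
  (forall i, log_product_sum D (A i) (s i)) ->
  log_product_sum D (fun a => \sum_(i <- r) A i a) (\sum_(i <- r) s i)%N.
Proof.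
move=> hA; elim: r => [|i r IH].
  by apply: (lps_weaken _ _ (lps_zero D)) => [a|]; rewrite ?big_nil.
by apply: (lps_weaken _ _ (lps_add (hA i) IH)) => [a|]; rewrite big_cons.
Qed.

(* The new factor C becomes one more block; doubling |D| costs one factor. *)
Lemma log_product_sum_mul (D E G : {set K}) (B C : asgK -> F) s :
  log_product_sum E B s -> dep_on G C -> [disjoint E & G] -> E :|: G = D ->
  (#|D| <= 2 * #|E|)%N -> E != set0 -> G != set0 ->
  log_product_sum D (fun a => B a * C a) s.
Proof.
move=> hB hC hEG hD hDE hE hG; elim: hB => {B s}.
- by apply: (lps_weaken _ _ (lps_zero D)) => // a; rewrite mul0r.
- move=> t lab g [hEt lab_onto g_dep].
  have t_gt0 : (0 < t)%N.
    by case/set0Pn: hE => b _; apply: leq_ltn_trans (ltn_ord (lab b)).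
  have notG b : b \in E -> b \notin G by move=> bE; rewrite (disjointFr hEG bE).
  pose lab' b := if b \in G then ord_max else widen_ord (leqnSn t) (lab b).
  pose g' (l : 'I_t.+1) := if unlift ord_max l is Some l' then g l' else C.
  have widen_lift (l : 'I_t) : widen_ord (leqnSn t) l = lift ord_max l.
    by apply: ord_inj; rewrite lift_max.
  apply: (lps_weaken _ _ (@lps_prod D t.+1 lab' g' _)) => //.
    move=> a; rewrite big_ord_recr /= /g' unlift_none; congr (_ * _).
    by apply: eq_bigr => l _; rewrite widen_lift liftK.
  split.
  + by rewrite (leq_trans hDE) // -(prednK t_gt0) expnS leq_mul2l hEt orbT.
  + move=> l; case: (unliftP ord_max l) => [l' ->|->].
      have [b bE <-] := lab_onto l'.
      by exists b; [rewrite -hD inE bE | rewrite /lab' (negPf (notG _ bE)) widen_lift].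
    by case/set0Pn: hG => b bG; exists b; [rewrite -hD inE bG orbT | rewrite /lab' bG].
  + move=> l; case: (unliftP ord_max l) => [l' ->|->]; rewrite /g' ?liftK ?unlift_none.
      apply: dep_onS (g_dep l'); apply/subsetP => b; rewrite !inE => /andP [bE /eqP <-].
      by rewrite -hD inE bE /lab' (negPf (notG _ bE)) widen_lift eqxx.
    apply: dep_onS hC; apply/subsetP => b bG.
    by rewrite !inE /lab' bG eqxx -hD inE bG orbT.
- move=> A1 A2 s1 s2 _ IH1 _ IH2.
  by apply: (lps_weaken _ _ (lps_add IH1 IH2)) => // a; rewrite mulrDl.
- move=> A1 A2 s1 s2 hA hs _ IH.
  by apply: (lps_weaken _ _ IH) => // a; rewrite hA.
Qed.

Lemma sm_cost_log_product_sum (D : {set K}) (A : asgK -> F) s :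
  sm_cost D A s -> log_product_sum D A s.
Proof.
elim=> {D A s} [D A D1 hA|D A r E G B C sB sC _ hEGi hB IHB hC IHC hA].
  case: existsP => [_|A0]; last first.
    have A_0 a : 0 = A a by apply/esym/eqP/negPn/negP => Aa; apply: A0; exists a.
    exact: lps_weaken A_0 (leqnn 0) (lps_zero D).
  have [b bD] : exists b, b \in D by apply/set0Pn; rewrite -card_gt0 D1.
  apply: (lps_weaken _ (leqnn 1) (@lps_prod D 1 (fun _ => ord0) (fun _ => A) _)).
    by move=> a; rewrite big_ord1.
  split=> [|l|l]; rewrite ?ord1 ?D1 //; first by exists b.
  by apply: dep_onS hA; apply/subsetP => k kD; rewrite inE kD.
apply: (lps_weaken (fun a => esym (hA a)) (leqnn _)); apply: log_product_sum_big => i.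
have [hEG [hE [hG hD]]] := hEGi i.
have cardD : #|D| = (#|E i| + #|G i|)%N.
  by rewrite -hD cardsU (disjoint_setI0 hEG) cards0 subn0.
have [GE|EG] := leqP #|G i| #|E i|.
  apply: lps_weaken (frefl _) (leq_addr _ _)
    (log_product_sum_mul (IHB i) (sm_cost_dep_on (hC i)) hEG hD _ hE hG).
  by rewrite cardD mul2n -addnn leq_add2l.
apply: lps_weaken (fun a => mulrC _ _) (leq_addl _ _)
  (log_product_sum_mul (IHC i) (sm_cost_dep_on (hB i)) _ _ _ hG hE).
- by rewrite disjoint_sym.
- by rewrite setUC.
- by rewrite cardD mul2n -addnn leq_add2r ltnW.
Qed.

End SetMultilinear.

Section IdxMatrices.
Variables (F : fieldType) (n d : nat).
Local Notation mat := 'M[F]_#|Idx n d|.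

Definition idx_mx (f : Idx n d -> Idx n d -> F) : mat :=
  \matrix_(x, y) f (enum_val x) (enum_val y).

Lemma eq_idx_mx f g : f =2 g -> idx_mx f = idx_mx g.
Proof. by move=> fg; apply/matrixP => x y; rewrite !mxE fg. Qed.

Lemma idx_mxE f i j : idx_mx f (enum_rank i) (enum_rank j) = f i j.
Proof. by rewrite mxE !enum_rankK. Qed.

Definition pt_swap (kappa : {set 'I_d}) (a b : Idx n d) : Idx n d :=
  [ffun k => if k \in kappa then b k else a k].

Lemma pt_swapK kappa a b : pt_swap kappa (pt_swap kappa a b) (pt_swap kappa b a) = a.
Proof. by apply/ffunP => k; rewrite !ffunE; case: (k \in kappa). Qed.

Lemma ptransE kappa (M : mat) x y :
  ptrans kappa M x y = M (enum_rank (pt_swap kappa (enum_val x) (enum_val y)))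
                         (enum_rank (pt_swap kappa (enum_val y) (enum_val x))).
Proof. by rewrite mxE. Qed.

Lemma ptrans_idx_mx kappa f :
  ptrans kappa (idx_mx f) = idx_mx (fun a b => f (pt_swap kappa a b) (pt_swap kappa b a)).
Proof. by apply/matrixP => x y; rewrite ptransE idx_mxE mxE. Qed.

Lemma ptransK kappa : involutive (@ptrans F n d kappa).
Proof.
move=> M; apply/matrixP => x y.
by rewrite !ptransE !enum_rankK !pt_swapK !enum_valK.
Qed.

Lemma ptrans_eq0 kappa (M : mat) : (ptrans kappa M == 0) = (M == 0).
Proof.
have ptrans0 : ptrans kappa (0 : mat) = 0 by apply/matrixP => x y; rewrite ptransE !mxE.
by apply/eqP/eqP => [h|->//]; rewrite -(ptransK kappa M) h.
Qed.

Lemma rank_idx_mx_mul (u v : Idx n d -> F) :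
  (\rank (idx_mx (fun a b => u a * v b)%R) <= 1)%N.
Proof.
have -> : idx_mx (fun a b => u a * v b) = \col_x u (enum_val x) *m \row_y v (enum_val y).
  by apply/matrixP => x y; rewrite !mxE big_ord1 !mxE.
exact: leq_trans (mxrankM_maxl _ _) (rank_leq_col _).
Qed.

Lemma PT_rank_min (M : mat) r : PT_rank_le M r -> (PT_rank M <= r)%N.
Proof. by move=> h; rewrite /PT_rank; case: ex_minnP => m _; apply; apply/asboolP. Qed.

Lemma PT_rankP (M : mat) : PT_rank_le M (PT_rank M).
Proof. by rewrite /PT_rank; case: ex_minnP => m /asboolP. Qed.

Lemma PT_rank0 : PT_rank (0 : mat) = 0%N.
Proof.
by apply/eqP; rewrite -leqn0; apply: PT_rank_min; exists [::]; rewrite big_nil.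
Qed.

Lemma PT_rankD (A B : mat) : (PT_rank (A + B) <= PT_rank A + PT_rank B)%N.
Proof.
have [sA [<- [hA ->]]] := PT_rankP A; have [sB [<- [hB ->]]] := PT_rankP B.
apply: PT_rank_min; exists (sA ++ sB); rewrite size_cat big_cat; split=> //; split=> //.
by move=> X; rewrite mem_cat => /orP [/hA|/hB].
Qed.

Lemma PT_rank_sum (I : Type) (r : seq I) (P : pred I) (B : I -> mat) :
  (PT_rank (\sum_(i <- r | P i) B i) <= \sum_(i <- r | P i) PT_rank (B i))%N.
Proof.
elim/big_rec2: _ => [|i A s _ hA]; first by rewrite PT_rank0.
exact: leq_trans (PT_rankD _ _) (leq_add (leqnn _) hA).
Qed.

Lemma PT_rank_le1 kappa (B : mat) :
  (\rank (ptrans kappa B) <= 1)%N -> (PT_rank B <= 1)%N.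
Proof.
have [->|B0] := eqVneq B 0; first by rewrite PT_rank0.
move=> hB; apply: PT_rank_min; exists [:: B]; rewrite big_seq1; split=> //; split=> // X.
rewrite inE => /eqP ->; exists kappa; apply/eqP; rewrite eqn_leq hB lt0n mxrank_eq0.
by rewrite ptrans_eq0.
Qed.

End IdxMatrices.

Section ShiftedAssignment.
Variables (n d : nat) (hn : (0 < n)%N).
Local Notation wdn k := (widen_ord (leqnSn d) k).
Local Notation lft k := (lift ord0 k).

Lemma pair_ix_div (x y : 'I_n) : (pair_ix x y %/ n)%N = x.
Proof. by rewrite /= divnMDl // divn_small // addn0. Qed.

Lemma pair_ix_mod (x y : 'I_n) : (pair_ix x y %% n)%N = y.
Proof. by rewrite /= modnMDl modn_small. Qed.

Lemma shifted_asg_first p q (i j : Idx n d) : (shifted_asg p q i j ord0 %/ n)%N = p.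
Proof. by rewrite ffunE pair_ix_div. Qed.

Lemma shifted_asg_last p q (i j : Idx n d) : (shifted_asg p q i j ord_max %% n)%N = q.
Proof. by rewrite ffunE pair_ix_mod /= insubF // ltnn. Qed.

Lemma shifted_asg_row p q (i j : Idx n d) k : (shifted_asg p q i j (wdn k) %% n)%N = i k.
Proof.
rewrite ffunE pair_ix_mod /= (insubT (fun m => m < d)%N (ltn_ord k)).
by congr (i _); apply: val_inj.
Qed.

Lemma shifted_asg_col p q (i j : Idx n d) k : (shifted_asg p q i j (lft k) %/ n)%N = j k.
Proof.
rewrite ffunE pair_ix_div /= add0n (insubT (fun m => m < d)%N (ltn_ord k)).
by congr (j _); apply: val_inj.
Qed.

Lemma shifted_asg_inj p q p' q' (i j i' j' : Idx n d) :
  shifted_asg p q i j = shifted_asg p' q' i' j' -> [/\ p = p', q = q', i = i' & j = j'].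
Proof.
move=> h; split; try apply/ffunP => k; apply: ord_inj.
- by rewrite -(shifted_asg_first p q i j) -(shifted_asg_first p' q' i' j') h.
- by rewrite -(shifted_asg_last p q i j) -(shifted_asg_last p' q' i' j') h.
- by rewrite -(shifted_asg_row p q i j) -(shifted_asg_row p' q' i' j') h.
- by rewrite -(shifted_asg_col p q i j) -(shifted_asg_col p' q' i' j') h.
Qed.

(* The paper's p = q = 1, i.e. the first element of 'I_n. *)
Definition shifted_asg1 (i j : Idx n d) := shifted_asg (Ordinal hn) (Ordinal hn) i j.

Lemma ShiftedTensor_asg1 (F : fieldType) (M : 'M[F]_#|Idx n d|) i j :
  ShiftedTensor M (shifted_asg1 i j) = M (enum_rank i) (enum_rank j).
Proof.
rewrite /ShiftedTensor; case: pickP => [[[[p q] i'] j'] /eqP /= h|none].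
  by have [<- <- <- <-] := shifted_asg_inj h; rewrite eqxx.
by have := none (Ordinal hn, Ordinal hn, i, j); rewrite /= eqxx.
Qed.

Lemma dep_on_shifted_asg1 (F : fieldType) (S : {set 'I_d.+1})
    (U : asg 'I_d.+1 (n * n) -> F) (i j i' j' : Idx n d) :
  dep_on S U -> (forall k, wdn k \in S -> i k = i' k) ->
  (forall k, lft k \in S -> j k = j' k) ->
  U (shifted_asg1 i j) = U (shifted_asg1 i' j').
Proof.
move=> hU hi hj; apply: hU => t tS; rewrite !ffunE; congr pair_ix.
  case: eqP => // t0; case: insubP => // k _ hk; apply: hj.
  suff -> : lft k = t by [].
  by apply: val_inj; rewrite /= /bump leq0n add1n hk prednK // lt0n; apply/eqP.
case: insubP => // k _ hk; apply: hi.
suff -> : wdn k = t by [].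
exact: val_inj.
Qed.

End ShiftedAssignment.

Section TensorMatrix.
Variables (F : fieldType) (n d : nat) (hn : (0 < n)%N).
Local Notation asgT := (asg 'I_d.+1 (n * n)).
Local Notation sa := (shifted_asg1 hn).

Definition tensor_mx (A : asgT -> F) : 'M[F]_#|Idx n d| := idx_mx (fun i j => A (sa i j)).

Lemma tensor_mx_ShiftedTensor M : tensor_mx (ShiftedTensor M) = M.
Proof. by apply/matrixP => x y; rewrite mxE ShiftedTensor_asg1 !enum_valK. Qed.

Lemma eq_tensor_mx (A B : asgT -> F) : A =1 B -> tensor_mx A = tensor_mx B.
Proof. by move=> AB; apply: eq_idx_mx => i j; rewrite AB. Qed.

Lemma tensor_mx0 : tensor_mx (fun _ => 0) = 0.
Proof. by apply/matrixP => x y; rewrite !mxE. Qed.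

Lemma tensor_mxD (A B : asgT -> F) :
  tensor_mx (fun a => A a + B a) = tensor_mx A + tensor_mx B.
Proof. by apply/matrixP => x y; rewrite !mxE. Qed.

End TensorMatrix.

Section SplitProduct.
Variables (F : fieldType) (n d : nat) (hn : (0 < n)%N) (S : {set 'I_d.+1}).
Variables (U V : asg 'I_d.+1 (n * n) -> F).
Hypotheses (hU : dep_on S U) (hV : dep_on (~: S) V).
Local Notation sa := (shifted_asg1 hn).
Local Notation wdn k := (widen_ord (leqnSn d) k).
Local Notation lft k := (lift ord0 k).

(* The k for which i_k and j_k are read on the same side of the split. *)
Let W := [set k : 'I_d | (wdn k \in S) == (lft k \in S)].
Let kappa := [set k : 'I_d | lft k \in S].
Let fix_on (al i : Idx n d) : Idx n d := [ffun k => if k \in W then al k else i k].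
Let agree (al i : Idx n d) : F := \prod_(k in W) (i k == al k)%:R.
(* Under [agree al i] the row index i equals [fix_on al i]; reading the
   W-coordinates from al instead of i is what keeps U and V separable below. *)
Let term (al : Idx n d) : 'M[F]_#|Idx n d| :=
  idx_mx (fun i j => agree al i * (U (sa (fix_on al i) j) * V (sa (fix_on al i) j))).

Lemma tensor_mx_mul_sum_terms :
  tensor_mx hn (fun a => U a * V a) = \sum_(al in pffun_on (Ordinal hn) W predT) term al.
Proof.
apply/matrixP => x y; rewrite summxE !mxE; set i := enum_val x; set j := enum_val y.
pose al_i : Idx n d := [ffun k => if k \in W then i k else Ordinal hn].
have al_iP : al_i \in pffun_on (Ordinal hn) W predT.
  by apply/pffun_onP; split=> //; apply/supportP => k kW; rewrite ffunE (negPf kW).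
rewrite (bigD1 al_i) //= big1 ?addr0 => [|al /andP [alP al_neq]]; rewrite mxE -/i -/j.
  rewrite /agree big1 ?mul1r => [|k kW]; last by rewrite ffunE kW eqxx.
  suff -> : fix_on al_i i = i by [].
  by apply/ffunP => k; rewrite !ffunE; case: ifP => // ->.
have [k kW ik] : exists2 k, k \in W & i k != al k.
  apply/exists_inP; apply: contraR al_neq => /exists_inPn i_al.
  apply/eqP/ffunP => k; rewrite ffunE; case: ifP => kW.
    by have /negPn/eqP -> := i_al k kW.
  by move/pffun_onP: alP => [/supportP al_supp _]; rewrite al_supp ?kW.
by rewrite /agree (bigD1 k) //= (negPf ik) !mul0r.
Qed.

(* Transposing the k with j_k on the S-side puts everything U reads into
   the row index and everything V reads into the column index. *)
Lemma PT_rank_term al : (PT_rank (term al) <= 1)%N.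
Proof.
apply: (@PT_rank_le1 _ _ _ kappa); rewrite ptrans_idx_mx.
pose agreeL a := \prod_(k in W | k \notin kappa) ((a k == al k)%:R : F).
pose agreeR b := \prod_(k in W | k \in kappa) ((b k == al k)%:R : F).
rewrite (@eq_idx_mx _ _ _ _ (fun a b => agreeL a * U (sa (fix_on al a) a)
                                   * (agreeR b * V (sa (fix_on al b) b)))).
  exact: rank_idx_mx_mul.
move=> a b; set a' := pt_swap kappa a b; set b' := pt_swap kappa b a.
have -> : agree al a' = agreeL a * agreeR b.
  rewrite /agree (bigID (fun k => k \in kappa)) /= mulrC.
  by congr (_ * _); apply: eq_bigr => k /andP [_ hk]; rewrite /a' ffunE ?(negPf hk) ?hk.
have -> : U (sa (fix_on al a') b') = U (sa (fix_on al a) a).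
  apply: (dep_on_shifted_asg1 _ hU) => k kS; rewrite !ffunE !inE kS //.
  by case: (_ \in S).
have -> : V (sa (fix_on al a') b') = V (sa (fix_on al b) b).
  apply: (dep_on_shifted_asg1 _ hV) => k; rewrite inE => /negPf kS.
    by rewrite !ffunE !inE kS; case: (_ \in S).
  by rewrite !ffunE !inE kS.
by rewrite mulrACA.
Qed.

Lemma PT_rank_tensor_mx_mul :
  (PT_rank (tensor_mx hn (fun a => U a * V a)%R) <= n ^ #|W|)%N.
Proof.
rewrite tensor_mx_mul_sum_terms; apply: leq_trans (PT_rank_sum _ _ _) _.
apply: (@leq_trans (\sum_(al in pffun_on (Ordinal hn) W predT) 1)).
  by apply: leq_sum => al _; apply: PT_rank_term.
by rewrite sum1_card card_pffun_on card_ord.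
Qed.

End SplitProduct.

Section LogProducts.
Variables (F : fieldType) (n d : nat) (hn : (0 < n)%N).
Local Notation wdn k := (widen_ord (leqnSn d) k).
Local Notation lft k := (lift ord0 k).

(* Colour the factors so that the path of blocks 0, ..., d changes colour at
   least t - 1 times, and split the product by colour. *)
Lemma PT_rank_log_product t (lab : 'I_d.+1 -> 'I_t)
    (g : 'I_t -> asg 'I_d.+1 (n * n) -> F) :
  log_product [set: 'I_d.+1] lab g ->
  (PT_rank (tensor_mx hn (fun a => \prod_(l < t) g l a)%R) <= n ^ (d.+1 - t))%N.
Proof.
case=> _ lab_onto g_dep; pose h k := lab (inord k).
have [col hcol] := exists_colouring h d.
have t_le : (t <= size (undup [seq h k | k <- iota 0 d.+1]))%N.
  rewrite -[X in (X <= _)%N](size_enum_ord t).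
  apply: uniq_leq_size (enum_uniq _) _ => l _.
  have [b _ <-] := lab_onto l; rewrite mem_undup; apply/mapP; exists (val b).
    by rewrite mem_iota ltn_ord.
  by rewrite /h inord_val.
pose S := [set b | ~~ col (lab b)].
have hU : dep_on S (fun a => \prod_(l < t | ~~ col l) g l a).
  move=> a a' aa'; apply: eq_bigr => l col_l; apply: g_dep => b.
  by rewrite !inE => /eqP lab_b; apply: aa'; rewrite inE lab_b.
have hV : dep_on (~: S) (fun a => \prod_(l < t | col l) g l a).
  move=> a a' aa'; apply: eq_bigr => l col_l; apply: g_dep => b.
  by rewrite !inE => /eqP lab_b; apply: aa'; rewrite !inE lab_b col_l.
have -> : tensor_mx hn (fun a => \prod_(l < t) g l a) = tensor_mx hn
    (fun a => (\prod_(l < t | ~~ col l) g l a) * \prod_(l < t | col l) g l a).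
  by apply: eq_tensor_mx => a; rewrite [LHS](bigID (fun l : 'I_t => col l)) mulrC.
apply: leq_trans (PT_rank_tensor_mx_mul hn hU hV) _; rewrite leq_pexp2l //.
set W := [set k : 'I_d | _].
have -> : #|W| = count (fun k => col (h k) == col (h k.+1)) (iota 0 d).
  rewrite -card_ord_count; apply: eq_card => k; rewrite !inE /h.
  have -> : inord k = wdn k by apply: ord_inj; rewrite inordK // ltnW // ltnS.
  have -> : inord k.+1 = lft k by apply: ord_inj; rewrite inordK // ltnS.
  by case: (col _); case: (col _).
have := count_predC (fun k => col (h k) == col (h k.+1)) (iota 0 d).
rewrite size_iota; move: hcol t_le.
by set c := count _ _; set c' := count _ _; set u := size _; lia.
Qed.

Lemma PT_rank_log_product_sum (A : asg 'I_d.+1 (n * n) -> F) s :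
  log_product_sum [set: 'I_d.+1] A s ->
  (PT_rank (tensor_mx hn A) <= s * n ^ (d - up_log 2 d.+1))%N.
Proof.
elim=> {A s} [|t lab g hg|A B s1 s2 _ hA _ hB|A B s s' AB ss' _ hA].
- by rewrite tensor_mx0 PT_rank0.
- apply: leq_trans (PT_rank_log_product hg) _; rewrite mul1n leq_pexp2l //.
  case: hg => card_le _ _; rewrite cardsT card_ord in card_le.
  have := up_log_min (isT : (1 < 2)%N) card_le; have := ltn_ord (lab ord0); lia.
- rewrite tensor_mxD mulnDl; exact: leq_trans (PT_rankD _ _) (leq_add hA hB).
- by rewrite -(eq_tensor_mx _ AB) (leq_trans hA) // leq_mul2r ss' orbT.
Qed.

End LogProducts.

Lemma expn_Nat_pow m k : (m ^ k)%N = Nat.pow m k.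
Proof. by elim: k => //= k IH; rewrite expnS IH mulnE. Qed.

Theorem theorem1p4 (F : fieldType) (n d : nat) (hn : (0 < n)%N) (hd : (0 < d)%N)
  (M : 'M[F]_#|Idx n d|) :
  Rdefinitions.Rge
    (Raxioms.INR (L_sm [set: 'I_d.+1] (ShiftedTensor M)))
    (PT_bound (PT_rank M) n d).
Proof.
have dep_M : dep_on [set: 'I_d.+1] (ShiftedTensor M).
  by move=> a b ab; congr ShiftedTensor; apply/ffunP => k; apply: ab; rewrite inE.
have setT_neq0 : [set: 'I_d.+1] != set0 by apply/set0Pn; exists ord0; rewrite inE.
have := sm_cost_log_product_sum (sm_cost_L_sm setT_neq0 dep_M).
move/(PT_rank_log_product_sum hn).
rewrite tensor_mx_ShiftedTensor expn_Nat_pow => PT_rank_le.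
apply: (@PT_bound_le _ _ _ _ (up_log 2 d.+1)); apply/leP => //.
- by apply: up_log_min => //; apply: ltn_expl.
- by apply: ltnW; rewrite -expn_Nat_pow; apply: up_logP.
Qed.
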